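(* In a complete graph with $n$ nodes (with arbitrary thresholds $t_I,t_E$ and budget $\beta$), the MES problem can be solved in $O(n)$ time.
   Context: Let $G=(V,E)$ be a graph, $N(v)$ the neighborhood of $v$, $d(v)=|N(v)|$, and $t_I,t_E:V\to\{0,1,2,\dots\}$ thresholds with $0\le t_I(v)\le t_E(v)\le d(v)+1$. For $S\subseteq V$: $\mathsf{Evg}[S,0]=\mathsf{Inf}[S,0]=S$, and for $\tau\ge1$, $\mathsf{Evg}[S,\tau]=\mathsf{Evg}[S,\tau-1]\cup\{u:|N(u)\cap\mathsf{Evg}[S,\tau-1]|\ge t_E(u)\}$, $\mathsf{Inf}[S,\tau]=\mathsf{Inf}[S,\tau-1]\cup\{u:|N(u)\cap\mathsf{Evg}[S,\tau-1]|\ge t_I(u)\}$; at the first $\rho$ with $\mathsf{Evg}[S,\rho]=\mathsf{Evg}[S,\rho-1]$ set $\mathsf{Inf}[S]=\mathsf{Inf}[S,\rho]$. The MES problem: given $G$, $t_I$, $t_E$ and budget $\beta$, find $S\subseteq V$ with $|S|\le\beta$ maximizing $|\mathsf{Inf}[S]|$. *)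

From mathcomp Require Import all_boot.
Set Implicit Arguments. Unset Strict Implicit. Unset Printing Implicit Defensive.

Section Dynamics.
Variables (T : finType) (adj : rel T) (tI tE : T -> nat).

Definition nbhd (v : T) : {set T} := [set u | adj v u].

Fixpoint Evg (S : {set T}) (tau : nat) : {set T} :=
  match tau with
  | 0 => S
  | tau'.+1 => Evg S tau' :|: [set u | tE u <= #|nbhd u :&: Evg S tau'|]
  end.

Fixpoint Inf (S : {set T}) (tau : nat) : {set T} :=
  match tau with
  | 0 => S
  | tau'.+1 => Inf S tau' :|: [set u | tI u <= #|nbhd u :&: Evg S tau'|]
  end.

(* rho = the first rho >= 1 with Evg[S,rho] = Evg[S,rho-1]
   (such a rho always exists with rho - 1 <= #|T|, the Evg chain being
   increasing in a finite type). *)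
Definition rho (S : {set T}) : nat :=
  (find (fun r => Evg S r.+1 == Evg S r) (iota 0 #|T|.+1)).+1.

Definition InfFinal (S : {set T}) : {set T} := Inf S (rho S).

Definition MES_optimal (beta : nat) (S : {set T}) : Prop :=
  #|S| <= beta /\
  forall S' : {set T}, #|S'| <= beta -> #|InfFinal S'| <= #|InfFinal S|.

End Dynamics.

Definition Kn_adj (n : nat) : rel 'I_n := fun u v => u != v.
Arguments Kn_adj n u v : clear implicits.

Definition valid_thresholds (T : finType) (adj : rel T) (tI tE : T -> nat) :=
  forall v : T, tI v <= tE v /\ tE v <= #|nbhd adj v| + 1.

(* Unit-cost RAM (registers indexed by nat, holding nats)              *)
Inductive instr : Type :=
| IConst of nat & nat          (* IConst r k   : M[r] := k                 *)
| IAdd of nat & nat & nat      (* IAdd r a b   : M[r] := M[a] + M[b]       *)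
| ISub of nat & nat & nat      (* ISub r a b   : M[r] := M[a] - M[b] (trunc)*)
| ILoad of nat & nat           (* ILoad r a    : M[r] := M[M[a]]           *)
| IStore of nat & nat          (* IStore a r   : M[M[a]] := M[r]           *)
| IJz of nat & nat             (* IJz r l      : if M[r] = 0 goto l        *)
| IJmp of nat                  (* IJmp l       : goto l                    *)
| IHalt.

Definition mem := nat -> nat.
Definition config := (nat * mem)%type.

Definition upd (m : mem) (r v : nat) : mem := fun x => if x == r then v else m x.

Definition step (P : seq instr) (c : config) : option config :=
  let: (pc, m) := c in
  if pc < size P then
    match nth IHalt P pc with
    | IConst r k => Some (pc.+1, upd m r k)
    | IAdd r a b => Some (pc.+1, upd m r (m a + m b))
    | ISub r a b => Some (pc.+1, upd m r (m a - m b))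
    | ILoad r a => Some (pc.+1, upd m r (m (m a)))
    | IStore a r => Some (pc.+1, upd m (m a) (m r))
    | IJz r l => Some (if m r == 0 then l else pc.+1, m)
    | IJmp l => Some (l, m)
    | IHalt => None
    end
  else None.

Definition halted (P : seq instr) (c : config) : bool :=
  if step P c is None then true else false.

Fixpoint exec (P : seq instr) (k : nat) (c : config) : config :=
  match k with
  | 0 => c
  | k'.+1 => if step P c is Some c' then exec P k' c' else c
  end.

(* Input encoding of a MES instance on K_n:
   M[0] = n, M[1] = beta, M[2+i] = t_I(i), M[2+n+i] = t_E(i) (i < n),
   all other registers 0; execution starts at pc = 0. *)
Definition init_mem (n beta : nat) (tI tE : 'I_n -> nat) : mem :=
  fun x =>
    if x == 0 then n else if x == 1 then beta else
    if x - 2 < n then nth 0 (codom tI) (x - 2)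
    else nth 0 (codom tE) (x - 2 - n).

(* Output decoding: on halting, M[0] = k and M[1], ..., M[k] list the
   vertices of the returned seed set S. *)
Definition output_set (n : nat) (m : mem) : {set 'I_n} :=
  [set i : 'I_n | [exists j : 'I_(m 0), m j.+1 == i]].

Arguments init_mem n beta tI tE x : clear implicits.
Arguments output_set n m : clear implicits.

From mathcomp Require Import all_boot.
From mathcomp Require Import zify.
Set Implicit Arguments. Unset Strict Implicit. Unset Printing Implicit Defensive.

(* On the complete graph a vertex outside the evangelist set E sees all of E,
   so the dynamics only depends on #|E|.  Let S consist of min(beta, n)
   vertices of largest t_I and let F be the size of its final evangelist set:
   every vertex with t_I <= F ends up influenced.  If some vertex does not,
   then all of S has t_I > F, so the vertices with t_E <= F are evangelists of
   S outside S and #|S| + #{t_E <= F} <= F.  A seed set S' with #|S'| <= #|S|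
   then only ever has evangelists in S' and {t_E <= F}, hence influences only
   S' and {t_I <= F}, which is no more than S influences.
   As t_I <= t_E <= n on K_n, such an S is found in O(n) RAM steps by a
   counting sort: a histogram of t_I yields the threshold th with
   #{t_I > th} <= min(beta, n) <= #{t_I >= th}, and one pass selects every
   vertex above th and the first few at th. *)

Section Dynamics.
Variables (T : finType) (adj : rel T) (tI tE : T -> nat).
Local Notation Evg := (Evg adj tE).
Local Notation Inf := (Inf adj tI tE).
Local Notation rho := (rho adj tE).
Implicit Types (S : {set T}) (t : nat).

Lemma card_nbhdI_le u (E : {set T}) : #|nbhd adj u :&: E| <= #|E|.
Proof. exact/subset_leq_card/subsetIr. Qed.

Lemma Evg_subS S t : Evg S t \subset Evg S t.+1.
Proof. exact: subsetUl. Qed.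

Lemma sub_Evg S t : S \subset Evg S t.
Proof. by elim: t => //= t IH; apply: subset_trans IH (subsetUl _ _). Qed.

Lemma Evg_sub_Inf S t : (forall u, tI u <= tE u) -> Evg S t \subset Inf S t.
Proof.
move=> tIE; elim: t => //= t IH; apply/subsetP=> u; rewrite !inE.
case/orP=> [/(subsetP IH) -> // | uE].
by rewrite (leq_trans (tIE u) uE) orbT.
Qed.

Lemma rho_gt0 S : 0 < rho S.
Proof. by []. Qed.

Lemma Evg_rho S : Evg S (rho S) = Evg S (rho S).-1.
Proof.
rewrite /rho succnK; set a := fun r => Evg S r.+1 == Evg S r.
suff has_a : has a (iota 0 #|T|.+1).
  have := nth_find 0 has_a; rewrite nth_iota ?add0n; first by move/eqP.
  by move: has_a; rewrite has_find size_iota.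
apply/negPn/negP => /hasPn no_fix.
suff grow r : r <= #|T|.+1 -> r <= #|Evg S r|.
  by have := grow _ (leqnn _); rewrite leqNgt ltnS max_card.
elim: r => // r IH lt_r; have /IH le_r := ltnW lt_r.
have proper_r : Evg S r \proper Evg S r.+1.
  by rewrite properEneq Evg_subS andbT eq_sym no_fix // mem_iota.
exact: leq_ltn_trans le_r (proper_card proper_r).
Qed.

Lemma Evg_sub_closed S (X : {set T}) :
  S \subset X -> (forall u, tE u <= #|X| -> u \in X) -> forall t, Evg S t \subset X.
Proof.
move=> SX closedX; elim=> //= t IH; rewrite subUset IH.
apply/subsetP=> u; rewrite inE => uE; apply: closedX.
exact: leq_trans uE (leq_trans (card_nbhdI_le _ _) (subset_leq_card IH)).
Qed.

Lemma Inf_sub_closed S (X Y : {set T}) :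
  (forall t, Evg S t \subset X) -> S \subset Y ->
  (forall u, tI u <= #|X| -> u \in Y) -> forall t, Inf S t \subset Y.
Proof.
move=> EX SY closedY; elim=> //= t IH; rewrite subUset IH.
apply/subsetP=> u; rewrite inE => uI; apply: closedY.
exact: leq_trans uI (leq_trans (card_nbhdI_le _ _) (subset_leq_card (EX t))).
Qed.

End Dynamics.

Definition top_set (T : finType) (f : T -> nat) (k : nat) (S : {set T}) :=
  #|S| = k /\ forall x y, x \in S -> y \notin S -> f y <= f x.

Section CompleteGraph.
Variables (T : finType) (tI tE : T -> nat).
Hypothesis tI_le_tE : forall u, tI u <= tE u.
Local Notation adj := (fun u v : T => u != v).
Local Notation Evg := (Evg adj tE).
Local Notation Inf := (Inf adj tI tE).
Local Notation rho := (rho adj tE).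
Implicit Types (S X : {set T}).
Local Notation final S := (Evg S (rho S)).

Lemma card_nbhdI_out u (E : {set T}) : u \notin E -> #|nbhd adj u :&: E| = #|E|.
Proof.
move=> uE; apply: eq_card => v; rewrite !inE.
by case: eqVneq => [<-|]; rewrite ?(negbTE uE).
Qed.

Lemma final_Evg_closed S u : tE u <= #|final S| -> u \in final S.
Proof.
rewrite Evg_rho => uE; rewrite -Evg_rho -(prednK (rho_gt0 _ _ S)) /= !inE.
by case: (boolP (u \in _)) => //= u_out; rewrite card_nbhdI_out // uE.
Qed.

Lemma le_final_Inf S u : tI u <= #|final S| -> u \in InfFinal adj tI tE S.
Proof.
rewrite /InfFinal Evg_rho -(prednK (rho_gt0 _ _ S)); set r := (rho S).-1 => uI; rewrite /= !inE.
case: (boolP (u \in Evg S r)) => [/(subsetP (Evg_sub_Inf adj S r tI_le_tE)) -> // | u_out].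
by rewrite card_nbhdI_out // uI orbT.
Qed.

Theorem top_set_optimal beta S :
  top_set tI (minn beta #|T|) S -> MES_optimal adj tI tE beta S.
Proof.
move=> [cardS topS]; split=> [|S' le_S'_beta]; first by rewrite cardS geq_minl.
have le_S'_S : #|S'| <= #|S| by rewrite cardS leq_min le_S'_beta max_card.
set F := #|final S|.
have S_Inf : S \subset InfFinal adj tI tE S.
  exact: subset_trans (sub_Evg _ _ _ _) (Evg_sub_Inf adj S _ tI_le_tE).
case: (boolP [forall u, u \in InfFinal adj tI tE S]) => [/forallP all_Inf|].
  by apply: subset_leq_card; apply/subsetP=> u _; apply: all_Inf.
rewrite negb_forall => /existsP[y yI].
have F_lt_y : F < tI y by rewrite ltnNge; apply: contra yI; apply: le_final_Inf.
have F_lt_S x : x \in S -> F < tI x.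
  move=> xS; apply: leq_trans F_lt_y (topS _ _ xS _).
  by apply: contra yI; apply: (subsetP S_Inf).
set C := [set u | tE u <= F]; set L := [set u | tI u <= F].
have disjoint_S X : (forall u, u \in X -> tI u <= F) -> #|S :|: X| = #|S| + #|X|.
  move=> X_le; rewrite -cardsUI; suff -> : S :&: X = set0 by rewrite cards0 addn0.
  apply/setP=> u; rewrite !inE; apply/negP=> /andP[/F_lt_S uS /X_le].
  by rewrite leqNgt uS.
have le_SC_F : #|S| + #|C| <= F.
  rewrite -disjoint_S => [|u]; last by rewrite inE; apply: leq_trans (tI_le_tE u).
  apply/subset_leq_card; rewrite subUset sub_Evg.
  by apply/subsetP=> u; rewrite inE; apply: final_Evg_closed.
have le_S'C_F : #|S' :|: C| <= F.
  by apply: leq_trans (leq_card_setU _ _) _; lia.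
have E'_sub : forall t, Evg S' t \subset S' :|: C.
  apply: Evg_sub_closed (subsetUl _ _) _ => u uE.
  by rewrite !inE (leq_trans uE le_S'C_F) orbT.
have /subset_leq_card I'_le : InfFinal adj tI tE S' \subset S' :|: L.
  apply: (Inf_sub_closed E'_sub (subsetUl _ _)) => u uI.
  by rewrite !inE (leq_trans uI le_S'C_F) orbT.
have /subset_leq_card SL_le : S :|: L \subset InfFinal adj tI tE S.
  by rewrite subUset S_Inf; apply/subsetP=> u; rewrite inE; apply: le_final_Inf.
rewrite disjoint_S in SL_le; last by move=> u; rewrite inE.
by apply: leq_trans I'_le _; apply: leq_trans (leq_card_setU _ _) _; lia.
Qed.

End CompleteGraph.

Section Selection.
Variable f : nat -> nat.

Definition count_eq i t := count (fun j => f j == t) (iota 0 i).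
Definition count_gt i t := count (fun j => t < f j) (iota 0 i).

Definition select_step th (st : nat * seq nat) i :=
  if th < f i then (st.1, rcons st.2 i)
  else if (f i == th) && (0 < st.1) then (st.1.-1, rcons st.2 i)
  else st.

Definition select th r i := foldl (select_step th) (r, [::]) (iota 0 i).

Lemma iotaS_rcons i : iota 0 i.+1 = rcons (iota 0 i) i.
Proof. by rewrite -addn1 iotaD cats1. Qed.

Lemma selectS th r i : select th r i.+1 = select_step th (select th r i) i.
Proof. by rewrite /select iotaS_rcons foldl_rcons. Qed.

Lemma count_eqS i t : count_eq i.+1 t = count_eq i t + (f i == t).
Proof. by rewrite /count_eq iotaS_rcons -cats1 count_cat /= addn0. Qed.

Lemma count_gtS i t : count_gt i.+1 t = count_gt i t + (t < f i).
Proof. by rewrite /count_gt iotaS_rcons -cats1 count_cat /= addn0. Qed.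

Lemma count_gt_pred i t : 0 < t -> count_gt i t.-1 = count_gt i t + count_eq i t.
Proof.
case: t => // t _; rewrite /count_gt /count_eq /=.
by elim: (iota 0 i) => //= j s ->; case: ltngtP; lia.
Qed.

Lemma count_gt_eq0 i : count_gt i 0 + count_eq i 0 = i.
Proof.
rewrite /count_gt /count_eq -[RHS](size_iota 0 i) -(count_predC (fun j => 0 < f j)).
by congr (_ + _); apply: eq_count => j /=; rewrite lt0n negbK.
Qed.

Lemma count_gt_ub i t : (forall j, j < i -> f j <= t) -> count_gt i t = 0.
Proof.
move=> le_t; apply/eqP; rewrite -leqn0 leqNgt -has_count; apply/hasPn => j.
by rewrite mem_iota add0n -leqNgt => /le_t.
Qed.

Lemma select_spec th r i :
  [/\ (select th r i).1 = r - minn r (count_eq i th),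
      size (select th r i).2 = count_gt i th + minn r (count_eq i th),
      forall x, (x \in (select th r i).2) =
        (x < i) && ((th < f x) || ((f x == th) && (count_eq x th < r)))
    & uniq (select th r i).2].
Proof.
elim: i => [|i [IH1 IH2 IH3 IH4]].
  by split => //=; rewrite /count_eq /= ?minn0 ?subn0.
rewrite selectS /select_step count_eqS count_gtS.
move: IH1 IH2 IH3 IH4; case: (select th r i) => q out /= IH1 IH2 IH3 IH4.
have i_out : i \notin out by rewrite IH3 ltnn.
have ltnS_eq x : (x < i.+1) = (x < i) || (x == i) by rewrite ltnS leq_eqVlt orbC.
case: (ltnP th (f i)) => h1 /=.
  have -> : (f i == th) = false by apply/eqP; lia.
  split => //=.
  - by rewrite addn0.
  - by rewrite size_rcons IH2; lia.
  - move=> x; rewrite mem_rcons in_cons IH3 ltnS_eq.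
    by case: (ltngtP x i) => hx //=; rewrite hx h1.
  - by rewrite rcons_uniq i_out IH4.
case: (eqVneq (f i) th) => h2 /=; last first.
  split => //=; rewrite ?addn0 // => x; rewrite IH3 ltnS_eq.
  by case: (ltngtP x i) => hx //=; rewrite hx ltnNge h1 (negbTE h2).
case: (posnP q) => hq /=.
  split => //=; try lia.
  move=> x; rewrite IH3 ltnS_eq.
  case: (ltngtP x i) => hx //=; rewrite hx ltnNge h1 h2 eqxx /=; lia.
split => //=.
- lia.
- rewrite size_rcons IH2; lia.
- move=> x; rewrite mem_rcons in_cons IH3 ltnS_eq.
  case: (ltngtP x i) => hx //=; rewrite hx ltnNge h1 h2 eqxx /=; lia.
- by rewrite rcons_uniq i_out IH4.
Qed.

Lemma size_select th i k : count_gt i th <= k -> k <= count_gt i th + count_eq i th ->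
  size (select th (k - count_gt i th) i).2 = k.
Proof. by case: (select_spec th (k - count_gt i th) i) => _ -> _ _; lia. Qed.

Lemma select_top th r i x y : x \in (select th r i).2 -> y < i -> y \notin (select th r i).2 ->
  f y <= f x.
Proof.
case: (select_spec th r i) => _ _ memE _; rewrite !memE => /andP[_ hx] -> /= hy.
have le_y : f y <= th by rewrite leqNgt; apply: contra hy => ->.
by case/orP: hx => [/ltnW | /andP[/eqP-> _]] //; apply: leq_trans.
Qed.

End Selection.

Section Reach.
Variable P : seq instr.

Lemma exec_halted k c : halted P c -> exec P k c = c.
Proof. by case: k => //= k; rewrite /halted; case: (step P c). Qed.

Lemma exec_add a b c : exec P (a + b) c = exec P b (exec P a c).
Proof.
elim: a c => // a IH c; rewrite addSn /=.
case E: (step P c) => [c'|]; first exact: IH.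
by rewrite exec_halted // /halted E.
Qed.

Definition reach c c' b := exists2 t, t <= b & exec P t c = c'.

Lemma reach_refl c : reach c c 0. Proof. by exists 0. Qed.

Lemma reach_trans c1 c2 c3 b1 b2 :
  reach c1 c2 b1 -> reach c2 c3 b2 -> reach c1 c3 (b1 + b2).
Proof.
move=> [t1 le1 <-] [t2 le2 <-]; exists (t1 + t2); first exact: leq_add.
by rewrite exec_add.
Qed.

Lemma reach_step c c' : step P c = Some c' -> reach c c' 1.
Proof. by move=> E; exists 1; rewrite //= E. Qed.

Lemma reach_le c c' b b' : b <= b' -> reach c c' b -> reach c c' b'.
Proof. by move=> le_b [t le_t E]; exists t => //; apply: leq_trans le_b. Qed.

Lemma exec_reach_halted c c' b k : reach c c' b -> halted P c' -> b <= k -> exec P k c = c'.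
Proof.
move=> [t le_t <-] stop le_b; rewrite -(subnKC (leq_trans le_t le_b)).
by rewrite exec_add exec_halted.
Qed.

Lemma reach_variant (Inv : nat -> config -> Prop) (Post : config -> Prop) s :
  (forall mu c, Inv mu c ->
     (exists c', reach c c' s /\ Post c') \/
     (exists c' mu', mu' < mu /\ reach c c' s /\ Inv mu' c')) ->
  forall mu c, Inv mu c -> exists c', reach c c' (mu.+1 * s) /\ Post c'.
Proof.
move=> round; elim/ltn_ind => mu IH c /round[[c' [r post]]|[c' [mu' [lt [r inv]]]]].
  by exists c'; split=> //; apply: reach_le r; rewrite mulSn leq_addr.
have [c'' [r' post]] := IH _ lt _ inv.
exists c''; split=> //; apply: reach_le (reach_trans r r').
by rewrite -mulSn leq_mul.
Qed.

Lemma stepE pc m : pc < size P -> step P (pc, m) =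
  match nth IHalt P pc with
    | IConst r k => Some (pc.+1, upd m r k)
    | IAdd r a b => Some (pc.+1, upd m r (m a + m b))
    | ISub r a b => Some (pc.+1, upd m r (m a - m b))
    | ILoad r a => Some (pc.+1, upd m r (m (m a)))
    | IStore a r => Some (pc.+1, upd m (m a) (m r))
    | IJz r l => Some (if m r == 0 then l else pc.+1, m)
    | IJmp l => Some (l, m)
    | IHalt => None
    end.
Proof. by rewrite /step => ->. Qed.

End Reach.

Lemma updE m r v x : upd m r v x = if x == r then v else m x.
Proof. by []. Qed.

Ltac decide_addr :=
  repeat match goal with
  | |- context [?a == ?b] =>
     first [ rewrite (_ : (a == b) = false); last by (apply/eqP; lia)
           | rewrite (_ : (a == b) = true); last by (apply/eqP; lia) ]
  end.

Ltac rewrite_cells :=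
  repeat match goal with H : ?f ?x = _ |- context [?f ?x] => rewrite H end.

Ltac simp_mem := rewrite ?updE; decide_addr; rewrite_cells; decide_addr.

Ltac sym_step :=
  eapply reach_trans;
  [ apply: reach_step; rewrite stepE; [ | by [] ]; rewrite [nth _ _ _]/=;
    cbv beta iota; simp_mem; cbv beta iota; reflexivity | ].

Tactic Notation "run" int_or_var(k) :=
  eapply reach_le; last first; [do k sym_step; exact: reach_refl | by []].

(* Cells 0 and 1 hold n and beta and cells 2, ..., n+1 hold t_I, but cells
   2..16 serve as registers: they are saved first and written last by
   straight-line code that only uses cells 0 and 1.  With A := n + 2 (beta + n)
   (M[A] := beta + n lets n and beta be recovered once cells 0 and 1 are
   reused) and Off := A + 20, t_I(i) is copied to Off + 2 + i, the histogram of
   t_I lives at 2 Off and the selected vertices are written from 3 Off on.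
     pc 0    halt at once if n = 0 (the output is then empty)
        5    save cells 2..16
        50   recover n and beta, copy the remaining t_I
        70   K := min beta n, histogram of t_I
        85   th := the largest t with #{i | t_I(i) >= t} >= K
        94   select every i with t_I(i) > th and the first K - #{i | t_I(i) > th}
             with t_I(i) = th
        118  move the selection to M[1..K] and set M[0] := K *)
Definition Prog : seq instr := [::
  (* 0 *)    IJz 0 186; IAdd 1 1 0; IAdd 0 0 1; IAdd 0 0 1; IStore 0 1;
  (* 5 *)    IConst 1 36; IAdd 1 1 0; IStore 1 16;
             IConst 1 35; IAdd 1 1 0; IStore 1 15;
             IConst 1 34; IAdd 1 1 0; IStore 1 14;
             IConst 1 33; IAdd 1 1 0; IStore 1 13;
             IConst 1 32; IAdd 1 1 0; IStore 1 12;
             IConst 1 31; IAdd 1 1 0; IStore 1 11;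
             IConst 1 30; IAdd 1 1 0; IStore 1 10;
             IConst 1 29; IAdd 1 1 0; IStore 1 9;
             IConst 1 28; IAdd 1 1 0; IStore 1 8;
             IConst 1 27; IAdd 1 1 0; IStore 1 7;
             IConst 1 26; IAdd 1 1 0; IStore 1 6;
             IConst 1 25; IAdd 1 1 0; IStore 1 5;
             IConst 1 24; IAdd 1 1 0; IStore 1 4;
             IConst 1 23; IAdd 1 1 0; IStore 1 3;
             IConst 1 22; IAdd 1 1 0; IStore 1 2;
  (* 50 *)   ILoad 2 0; ISub 3 0 2; ISub 3 3 2; ISub 4 2 3; IConst 5 1;
             IConst 10 20; IAdd 10 10 0; IAdd 11 10 10; IAdd 12 11 10; IConst 7 17;
             IAdd 8 10 7;
  (* 61 *)   ISub 6 7 3; ISub 6 6 5; IJz 6 65; IJmp 70;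
  (* 65 *)   ILoad 2 7; IStore 8 2; IAdd 7 7 5; IAdd 8 8 5; IJmp 61;
  (* 70 *)   ISub 6 4 3; ISub 4 4 6; IConst 7 0; IConst 8 2; IAdd 8 8 10;
  (* 75 *)   ISub 6 3 7; IJz 6 85; ILoad 2 8; IAdd 9 11 2; ILoad 6 9;
             IAdd 6 6 5; IStore 9 6; IAdd 7 7 5; IAdd 8 8 5; IJmp 75;
  (* 85 *)   IConst 14 0; IAdd 13 3 14;
  (* 87 *)   IAdd 9 11 13; ILoad 2 9; IAdd 14 14 2; ISub 6 4 14; IJz 6 94;
             ISub 13 13 5; IJmp 87;
  (* 94 *)   ISub 15 14 2; ISub 15 4 15; IConst 7 0; IConst 8 2; IAdd 8 8 10;
             IAdd 9 12 7;
  (* 100 *)  ISub 6 3 7; IJz 6 118; ILoad 2 8; ISub 6 2 13; IJz 6 108;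
             IStore 9 7; IAdd 9 9 5; IJmp 115;
  (* 108 *)  ISub 6 13 2; IJz 6 111; IJmp 115;
  (* 111 *)  IJz 15 115; IStore 9 7; IAdd 9 9 5; ISub 15 15 5;
  (* 115 *)  IAdd 7 7 5; IAdd 8 8 5; IJmp 100;
  (* 118 *)  ISub 9 12 5; IStore 9 4; ILoad 2 12; ISub 9 9 5; IStore 9 2;
             IConst 6 0; IAdd 7 4 6; ISub 8 12 5; IAdd 8 8 7;
  (* 127 *)  IConst 6 16; ISub 6 7 6; IJz 6 135; ILoad 2 8; IStore 7 2;
             ISub 7 7 5; ISub 8 8 5; IJmp 127;
  (* 135 *)  ISub 1 12 5; ISub 1 1 5;
  (* 137 *)  IConst 0 17; IAdd 0 0 1; ILoad 16 0;
             IConst 0 16; IAdd 0 0 1; ILoad 15 0;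
             IConst 0 15; IAdd 0 0 1; ILoad 14 0;
             IConst 0 14; IAdd 0 0 1; ILoad 13 0;
             IConst 0 13; IAdd 0 0 1; ILoad 12 0;
             IConst 0 12; IAdd 0 0 1; ILoad 11 0;
             IConst 0 11; IAdd 0 0 1; ILoad 10 0;
             IConst 0 10; IAdd 0 0 1; ILoad 9 0;
             IConst 0 9; IAdd 0 0 1; ILoad 8 0;
             IConst 0 8; IAdd 0 0 1; ILoad 7 0;
             IConst 0 7; IAdd 0 0 1; ILoad 6 0;
             IConst 0 6; IAdd 0 0 1; ILoad 5 0;
             IConst 0 5; IAdd 0 0 1; ILoad 4 0;
             IConst 0 4; IAdd 0 0 1; ILoad 3 0;
             IConst 0 3; IAdd 0 0 1; ILoad 2 0;
             IConst 0 1; IAdd 0 0 1; ILoad 1 1; ILoad 0 0;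
  (* 186 *)  IHalt].

Lemma save_block k m : k < 15 ->
  reach Prog (5 + 3 * k, m)
    (8 + 3 * k, upd (upd (upd m 1 (36 - k)) 1 (36 - k + m 0)) (36 - k + m 0) (m (16 - k))) 3.
Proof. by do 15 (case: k => [_|k]; [run 3|]). Qed.

Section ProgCorrectness.
Variables (n beta : nat) (m0 : nat -> nat).
Hypotheses (m0_n : m0 0 = n) (m0_beta : m0 1 = beta).
Hypothesis m0_free : forall x, n + n + 2 <= x -> m0 x = 0.
Local Notation A := (n + (beta + n) + (beta + n)).
Local Notation Off := (20 + A).
Local Notation Hist := (Off + Off).
Local Notation Sel := (Off + Off + Off).
Local Notation K := (minn beta n).

Record Saving (mu : nat) (c : config) : Prop := {
  sv_left : mu <= 15;
  sv_pc : c.1 = 5 + 3 * (15 - mu);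
  sv_base : c.2 0 = A;
  sv_nbeta : c.2 A = beta + n;
  sv_todo : forall x, 2 <= x <= n.+1 -> x <= mu.+1 -> c.2 x = m0 x;
  sv_done : forall x, 2 <= x <= n.+1 -> mu.+1 < x <= 16 -> c.2 (Off + x) = m0 x;
  sv_high : forall x, 17 <= x <= n.+1 -> c.2 x = m0 x;
  sv_free : forall x, Hist <= x -> c.2 x = 0 }.

Lemma setup_phase : 0 < n -> exists c, reach Prog (0, m0) c 5 /\ Saving 15 c.
Proof.
move=> n_gt0; eexists; split; first run 5.
constructor => //=.
- by simp_mem.
- by simp_mem.
- by move=> x hx _; simp_mem.
- by move=> x hx; lia.
- by move=> x hx; simp_mem.
- move=> x hx; simp_mem; apply: m0_free; lia.
Qed.

Lemma save_phase c : Saving 15 c -> exists c', reach Prog c c' 48 /\ Saving 0 c'.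
Proof.
move=> H; apply: (reach_variant (Inv := Saving) (Post := Saving 0) (s := 3)) H => mu [pc m] I.
case: mu I => [|mu] I; first by left; exists (pc, m); split=> //; apply: reach_le (reach_refl _ _).
right; have [/= hmu hpc h0 hA h3 h4 h5 h6] := I.
eexists (_, _), mu; split=> //; split.
  rewrite hpc; apply: save_block; lia.
have e1 : 16 - (15 - mu.+1) = mu.+2 by lia.
have e2 : 36 - (15 - mu.+1) + A = Off + mu.+2 by lia.
rewrite h0 e1 e2.
constructor => //=; try lia.
- by simp_mem.
- move=> x hx hx2; simp_mem; apply: h3; lia.
- move=> x hx hx2; simp_mem; case: (eqVneq x mu.+2) => [->|ne].
    by rewrite eqxx; apply: h3; lia.
  have -> : (Off + x == Off + mu.+2) = false by apply/eqP; lia.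
  apply: h4; lia.
- by move=> x hx; simp_mem; apply: h5.
- by move=> x hx; simp_mem; apply: h6.
Qed.

Record Copying (j : nat) (c : config) : Prop := {
  cp_pc : c.1 = 61;
  cp_ge : 17 <= j;
  cp_src : c.2 7 = j;
  cp_dst : c.2 8 = Off + j;
  cp_n : c.2 3 = n;
  cp_beta : c.2 4 = beta;
  cp_one : c.2 5 = 1;
  cp_off : c.2 10 = Off;
  cp_hist : c.2 11 = Hist;
  cp_sel : c.2 12 = Sel;
  cp_done : forall x, 2 <= x <= n.+1 -> x < j -> c.2 (Off + x) = m0 x;
  cp_todo : forall x, j <= x <= n.+1 -> c.2 x = m0 x;
  cp_free : forall x, Hist <= x -> c.2 x = 0 }.

Record Copied (c : config) : Prop := {
  cd_pc : c.1 = 70;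
  cd_n : c.2 3 = n;
  cd_beta : c.2 4 = beta;
  cd_one : c.2 5 = 1;
  cd_off : c.2 10 = Off;
  cd_hist : c.2 11 = Hist;
  cd_sel : c.2 12 = Sel;
  cd_data : forall x, 2 <= x <= n.+1 -> c.2 (Off + x) = m0 x;
  cd_free : forall x, Hist <= x -> c.2 x = 0 }.

Lemma copy_init c : Saving 0 c -> exists c', reach Prog c c' 11 /\ Copying 17 c'.
Proof.
case: c => pc m [/= _ hpc h0 hA h3 h4 h5 h6]; rewrite hpc /=.
eexists; split; first run 11.
constructor => //=; try (by simp_mem); try (simp_mem; lia).
- move=> x hx hx2; simp_mem; apply: h4; lia.
- move=> x hx; simp_mem; apply: h5; lia.
- move=> x hx; simp_mem; apply: h6; lia.
Qed.

Lemma copy_phase c : Copying 17 c -> exists c', reach Prog c c' ((n.+2 - 17).+1 * 8) /\ Copied c'.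
Proof.
move=> H.
apply: (reach_variant (Inv := fun mu c => exists j, mu = n.+2 - j /\ Copying j c) (s := 8));
  last by exists 17.
move=> mu [pc m] [j [-> [/= hpc hj h7 h8 h3 h4 h5 h10 h11 h12 hd hr hz]]]; subst pc.
case: (leqP j n.+1) => hjn.
- right; eexists; exists (n.+2 - j.+1); split; first lia; split; first run 8.
  exists j.+1; split=> //.
  constructor => //=; try (by simp_mem); try (simp_mem; lia).
  + move=> x hx hx2; simp_mem; case: (eqVneq x j) => [->|ne].
      by rewrite eqxx; apply: hr; lia.
    have -> : (Off + x == Off + j) = false by apply/eqP; lia.
    apply: hd; lia.
  + move=> x hx; simp_mem; apply: hr; lia.
  + move=> x hx; simp_mem; apply: hz; lia.
- left; eexists; split; first run 4.
  constructor => //=; try (by simp_mem).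
  + move=> x hx; simp_mem; apply: hd; lia.
  + move=> x hx; simp_mem; apply: hz; lia.
Qed.

Let tv i := m0 (2 + i).
Hypothesis tv_le_n : forall i, i < n -> tv i <= n.

Record Counting (i : nat) (c : config) : Prop := {
  ct_pc : c.1 = 75;
  ct_le : i <= n;
  ct_idx : c.2 7 = i;
  ct_ptr : c.2 8 = Off + 2 + i;
  ct_n : c.2 3 = n;
  ct_K : c.2 4 = K;
  ct_one : c.2 5 = 1;
  ct_off : c.2 10 = Off;
  ct_hist : c.2 11 = Hist;
  ct_sel : c.2 12 = Sel;
  ct_data : forall x, x < n -> c.2 (Off + 2 + x) = tv x;
  ct_count : forall t, t <= n -> c.2 (Hist + t) = count_eq tv i t }.

Lemma count_init c : Copied c -> exists c', reach Prog c c' 5 /\ Counting 0 c'.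
Proof.
case: c => pc m [/= hpc h3 h4 h5 h10 h11 h12 hd hz]; subst pc.
eexists; split; first run 5.
constructor => //=; try (by simp_mem); try (simp_mem; lia).
- move=> x hx; simp_mem; rewrite /tv -hd; [congr m; lia | lia].
- move=> t ht; simp_mem; apply: hz; lia.
Qed.

Record Counted (c : config) : Prop := {
  cn_pc : c.1 = 85;
  cn_n : c.2 3 = n;
  cn_K : c.2 4 = K;
  cn_one : c.2 5 = 1;
  cn_off : c.2 10 = Off;
  cn_hist : c.2 11 = Hist;
  cn_sel : c.2 12 = Sel;
  cn_data : forall x, x < n -> c.2 (Off + 2 + x) = tv x;
  cn_count : forall t, t <= n -> c.2 (Hist + t) = count_eq tv n t }.

Lemma count_phase c : Counting 0 c -> exists c', reach Prog c c' (n.+1 * 10) /\ Counted c'.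
Proof.
move=> H.
apply: (reach_variant (Inv := fun mu c => exists i, mu = n - i /\ Counting i c) (s := 10));
  last by exists 0; rewrite subn0.
move=> mu [pc m] [i [-> [/= hpc hi h7 h8 h3 h4 h5 h10 h11 h12 hd hh]]]; subst pc.
case: (ltnP i n) => hin.
- have ht := hd _ hin; have hti := tv_le_n hin; have hh1 := hh _ hti.
  right; eexists; exists (n - i.+1); split; first lia; split; first run 10.
  exists i.+1; split=> //.
  constructor => //=; try (by simp_mem); try (simp_mem; lia).
  + by move=> x hx; simp_mem; apply: hd.
  + move=> t htn; rewrite count_eqS; simp_mem; case: (eqVneq t (tv i)) => [->|ne].
      by rewrite eqxx.
    have -> : (Hist + t == Hist + tv i) = false by apply/eqP; lia.
    by rewrite hh // addn0.
- left; have ein : i = n by lia.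
  rewrite {}ein in h7 h8 hh hi hin; eexists; split; first run 2.
  by constructor.
Qed.

Local Notation heq := (count_eq tv n).
Local Notation hgt := (count_gt tv n).

Record Scanning (t : nat) (c : config) : Prop := {
  sc_pc : c.1 = 87;
  sc_le : t <= n;
  sc_th : c.2 13 = t;
  sc_acc : c.2 14 = hgt t;
  sc_K : hgt t <= K;
  sc_n : c.2 3 = n;
  sc_regK : c.2 4 = K;
  sc_one : c.2 5 = 1;
  sc_off : c.2 10 = Off;
  sc_hist : c.2 11 = Hist;
  sc_sel : c.2 12 = Sel;
  sc_data : forall x, x < n -> c.2 (Off + 2 + x) = tv x;
  sc_count : forall t, t <= n -> c.2 (Hist + t) = heq t }.

Lemma scan_init c : Counted c -> exists c', reach Prog c c' 2 /\ Scanning n c'.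
Proof.
case: c => pc m [/= hpc h3 h4 h5 h10 h11 h12 hd hh]; subst pc.
have hgt_n : hgt n = 0 by apply: count_gt_ub.
eexists; split; first run 2.
constructor => //=; rewrite ?hgt_n; try (by simp_mem); simp_mem; lia.
Qed.

Record Thresholded (th : nat) (c : config) : Prop := {
  tr_pc : c.1 = 94;
  tr_le : th <= n;
  tr_th : c.2 13 = th;
  tr_eq : c.2 2 = heq th;
  tr_acc : c.2 14 = hgt th + heq th;
  tr_gt : hgt th <= K;
  tr_ge : K <= hgt th + heq th;
  tr_n : c.2 3 = n;
  tr_K : c.2 4 = K;
  tr_one : c.2 5 = 1;
  tr_off : c.2 10 = Off;
  tr_sel : c.2 12 = Sel;
  tr_data : forall x, x < n -> c.2 (Off + 2 + x) = tv x }.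

Lemma scan_phase c : Scanning n c ->
  exists c', reach Prog c c' (n.+1 * 7) /\ exists th, Thresholded th c'.
Proof.
move=> H; apply: (reach_variant (Inv := Scanning) (s := 7)) H.
move=> t [pc m] [/= hpc ht h13 h14 hK h3 h4 h5 h10 h11 h12 hd hh]; subst pc.
have hh1 := hh _ ht.
case: (leqP K (hgt t + heq t)) => hk.
- left; eexists; split; first run 5.
  exists t; constructor => //=; try (by simp_mem); simp_mem; lia.
- have t_gt0 : 0 < t.
    by case: (posnP t) => // t0; move: hk; rewrite t0 count_gt_eq0; lia.
  right; eexists; exists t.-1; split; first lia; split; first run 7.
  constructor => //=; rewrite ?count_gt_pred //; try (by simp_mem); simp_mem; lia.
Qed.

Record Selecting (th r i : nat) (c : config) : Prop := {
  sl_pc : c.1 = 100;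
  sl_le : i <= n;
  sl_idx : c.2 7 = i;
  sl_ptr : c.2 8 = Off + 2 + i;
  sl_quota : c.2 15 = (select tv th r i).1;
  sl_end : c.2 9 = Sel + size (select tv th r i).2;
  sl_out : forall j, j < size (select tv th r i).2 ->
    c.2 (Sel + j) = nth 0 (select tv th r i).2 j;
  sl_n : c.2 3 = n;
  sl_K : c.2 4 = K;
  sl_one : c.2 5 = 1;
  sl_sel : c.2 12 = Sel;
  sl_th : c.2 13 = th;
  sl_data : forall x, x < n -> c.2 (Off + 2 + x) = tv x }.

Lemma select_init th c : Thresholded th c ->
  exists c', reach Prog c c' 6 /\ Selecting th (K - hgt th) 0 c'.
Proof.
case: c => pc m [/= hpc ht h13 h2 h14 hk1 hk2 h3 h4 h5 h10 h12 hd]; subst pc.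
eexists; split; first run 6.
constructor => //=; try (by simp_mem); try (simp_mem; lia).
Qed.

Record Selected (th r : nat) (c : config) : Prop := {
  sd_pc : c.1 = 118;
  sd_K : c.2 4 = K;
  sd_one : c.2 5 = 1;
  sd_sel : c.2 12 = Sel;
  sd_out : forall j, j < size (select tv th r n).2 ->
    c.2 (Sel + j) = nth 0 (select tv th r n).2 j }.

Lemma select_round th r i m : i < n -> Selecting th r i (100, m) ->
  exists2 c', reach Prog (100, m) c' 14 & Selecting th r i.+1 c'.
Proof.
move=> hin [/= _ hi h7 h8 h15 h9 hout h3 h4 h5 h12 h13 hd].
have ht := hd _ hin.
move: h15 h9 hout; case E: (select tv th r i) => [q out] /= h15 h9 hout.
have hS := selectS tv th r i; rewrite E /select_step /= in hS.
have push j : j < (size out).+1 -> j != size out -> m (Sel + j) = nth 0 (rcons out i) j.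
  by move=> hj ne; rewrite nth_rcons ifT ?hout // ltn_neqAle ne -ltnS.
case: (ltnP th (tv i)) => h1.
  rewrite h1 in hS; eexists; first run 11.
  constructor => //=; rewrite ?hS /= ?size_rcons; try (by simp_mem); try (simp_mem; lia);
    try (by move=> ? ?; simp_mem; auto).
  move=> j hj; simp_mem; case: (eqVneq j (size out)) => [->|ne].
    by rewrite eqxx nth_rcons ltnn eqxx.
  have -> : (Sel + j == Sel + size out) = false by apply/eqP; lia.
  exact: push.
rewrite ltnNge h1 /= in hS.
case: (eqVneq (tv i) th) => h2 /= in hS *; last first.
  eexists; first run 11.
  by constructor => //=; rewrite ?hS /=; try (by simp_mem); try (simp_mem; lia);
    move=> ? ?; simp_mem; auto.
case: (posnP q) => hq /= in hS *.
  eexists; first run 11.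
  by constructor => //=; rewrite ?hS /=; try (by simp_mem); try (simp_mem; lia);
    move=> ? ?; simp_mem; auto.
eexists; first run 14.
constructor => //=; rewrite ?hS /= ?size_rcons; try (by simp_mem); try (simp_mem; lia);
  try (by move=> ? ?; simp_mem; auto).
move=> j hj; simp_mem; case: (eqVneq j (size out)) => [->|ne].
  by rewrite eqxx nth_rcons ltnn eqxx.
have -> : (Sel + j == Sel + size out) = false by apply/eqP; lia.
exact: push.
Qed.

Lemma select_phase th r c : Selecting th r 0 c ->
  exists c', reach Prog c c' (n.+1 * 14) /\ Selected th r c'.
Proof.
move=> H.
apply: (reach_variant (Inv := fun mu c => exists i, mu = n - i /\ Selecting th r i c) (s := 14));
  last by exists 0; rewrite subn0.
move=> mu [pc m] [i [-> inv]]; have /= pc_eq := sl_pc inv; subst pc.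
case: (ltnP i n) => hin.
  have [c' run inv'] := select_round hin inv.
  by right; exists c', (n - i.+1); split; [lia | split=> //; exists i.+1].
have ein : i = n by have := sl_le inv; lia.
subst i; case: inv => /= _ _ h7 h8 h15 h9 hout h3 h4 h5 h12 h13 hd.
by left; eexists; split; [run 2 | constructor].
Qed.

Section Out.
Variable out : nat -> nat.

Record Shifting (j : nat) (c : config) : Prop := {
  sh_pc : c.1 = 127;
  sh_le : j <= K;
  sh_idx : c.2 7 = j;
  sh_ptr : c.2 8 = Sel - 1 + j;
  sh_one : c.2 5 = 1;
  sh_sel : c.2 12 = Sel;
  sh_K : c.2 (Sel - 1) = K;
  sh_first : c.2 (Sel - 2) = out 0;
  sh_out : forall x, x < K -> c.2 (Sel + x) = out x;
  sh_done : forall x, j < x <= K -> c.2 x = out (x - 1) }.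

Lemma shift_init m : m 4 = K -> m 5 = 1 -> m 12 = Sel -> (forall x, x < K -> m (Sel + x) = out x) ->
  out 0 = m Sel ->
  exists c', reach Prog (118, m) c' 9 /\ Shifting K c'.
Proof.
move=> h4 h5 h12 hw hw0.
eexists; split; first run 9.
constructor => //=; try (by simp_mem); try (simp_mem; lia).
move=> x hx; simp_mem; exact: hw.
Qed.

Record Shifted (c : config) : Prop := {
  sd0_pc : c.1 = 135;
  sd0_one : c.2 5 = 1;
  sd0_sel : c.2 12 = Sel;
  sd0_K : c.2 (Sel - 1) = K;
  sd0_first : c.2 (Sel - 2) = out 0;
  sd0_out : forall x, x < K -> c.2 (Sel + x) = out x;
  sd0_done : forall x, 16 < x <= K -> c.2 x = out (x - 1) }.

Lemma shift_phase c : Shifting K c -> exists c', reach Prog c c' (K.+1 * 8) /\ Shifted c'.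
Proof.
move=> H; apply: (reach_variant (Inv := Shifting) (Post := Shifted) (s := 8)) H.
move=> j [pc m] [/= hpc hj h7 h8 h5 h12 hm1 hm2 hw hd]; subst pc.
case: (leqP j 16) => hj16.
{ left; eexists; split; first run 3.
  constructor => //=; try (by simp_mem); try (simp_mem; lia).
  all: try (by move=> x hx; simp_mem; apply: hw).
  all: move=> x hx; simp_mem; apply: hd; lia. }
{ have hwj : m (Sel - 1 + j) = out (j - 1).
    rewrite (_ : Sel - 1 + j = Sel + (j - 1)); last lia.
    apply: hw; lia.
  right; eexists; exists j.-1; split; first lia; split; first run 8.
  constructor => //=; try (by simp_mem); try (simp_mem; lia).
  all: try (by move=> x hx; simp_mem; apply: hw).
  all: move=> x hx; simp_mem; case: (eqVneq x j) => [->|ne].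
  all: rewrite ?eqxx //.
  all: rewrite ?(negbTE ne).
  all: apply: hd; lia. }
Qed.

Lemma restore_block k m : k < 15 -> m 1 = Sel - 2 ->
  reach Prog (137 + 3*k, m)
    (140 + 3*k, upd (upd (upd m 0 (17 - k)) 0 (17 - k + (Sel - 2))) (16 - k) (m (17 - k + (Sel - 2)))) 3.
Proof. by move=> + h1; do 15 (case: k => [_|k]; [run 3|]). Qed.

Record Restoring (mu : nat) (c : config) : Prop := {
  rs_left : mu <= 15;
  rs_pc : c.1 = 137 + 3 * (15 - mu);
  rs_ptr : c.2 1 = Sel - 2;
  rs_K : c.2 (Sel - 1) = K;
  rs_first : c.2 (Sel - 2) = out 0;
  rs_out : forall x, x < K -> c.2 (Sel + x) = out x;
  rs_high : forall x, 16 < x <= K -> c.2 x = out (x - 1);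
  rs_done : forall x, mu.+1 < x <= 16 -> x <= K -> c.2 x = out (x - 1) }.

Lemma restore_init c : Shifted c -> exists c', reach Prog c c' 2 /\ Restoring 15 c'.
Proof.
case: c => pc m [/= hpc h5 h12 hm1 hm2 hw hd]; subst pc.
eexists; split; first run 2.
constructor => //=; try (by simp_mem); try (simp_mem; lia).
all: try (by move=> x hx; simp_mem; apply: hw).
all: try (by move=> x hx; simp_mem; apply: hd).
all: try (by move=> x; lia).
Qed.

Lemma restore_phase c : Restoring 15 c -> exists c', reach Prog c c' 48 /\ Restoring 0 c'.
Proof.
move=> H; apply: (reach_variant (Inv := Restoring) (Post := Restoring 0) (s := 3)) H => mu [pc m] I.
case: mu I => [|mu] I; first by left; exists (pc, m); split=> //; apply: reach_le (reach_refl _ _).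
right; have [/= hmu hpc h1 hm1 hm2 hw hd16 hd] := I.
have hl : m (17 - (15 - mu.+1) + (Sel - 2)) = if mu.+2 <= K then out mu.+1 else m (Sel + mu.+1).
  rewrite (_ : 17 - (15 - mu.+1) + (Sel - 2) = Sel + mu.+1); last lia.
  by case: ifP => // hk; apply: hw; lia.
eexists (_, _), mu; split=> //; split.
  rewrite hpc; apply: restore_block => //; lia.
have e1 : 16 - (15 - mu.+1) = mu.+2 by lia.
rewrite e1 hl.
constructor => //=; try lia; try (by simp_mem).
all: try (by move=> x hx; simp_mem; apply: hw).
all: try (by move=> x hx; simp_mem; apply: hd16).
all: move=> x hx hxK; simp_mem; case: (eqVneq x mu.+2) => [ex|ne].
all: try (by rewrite ex; rewrite ex in hxK; rewrite hxK).
all: rewrite ?(negbTE ne).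
all: apply: hd => //; lia.
Qed.

Lemma restore_final c : Restoring 0 c -> exists m', reach Prog c (186, m') 4 /\
  m' 0 = K /\ forall j, j < K -> m' j.+1 = out j.
Proof.
case: c => pc m [/= _ hpc h1 hm1 hm2 hw hd16 hd]; subst pc.
eexists; split; first run 4.
split; first by simp_mem.
move=> j hj; simp_mem.
case: (eqVneq j 0) => [ej|nj]; first by rewrite ej.
have -> : (j.+1 == 1) = false by apply/eqP; lia.
case: (leqP j 15) => hj15.
  by rewrite hd; [rewrite subn1 | lia | lia].
by rewrite hd16; [rewrite subn1 | lia].
Qed.

End Out.

Lemma Prog_run : 0 < n -> exists m' th,
  [/\ reach Prog (0, m0) (186, m') (200 * n + 200),
      hgt th <= K <= hgt th + heq th, m' 0 = K
    & forall j, j < K -> m' j.+1 = nth 0 (select tv th (K - hgt th) n).2 j].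
Proof.
move=> n_gt0.
have [c1 [r1 i1]] := setup_phase n_gt0.
have [c2 [r2 i2]] := save_phase i1.
have [c3 [r3 i3]] := copy_init i2.
have [c4 [r4 i4]] := copy_phase i3.
have [c5 [r5 i5]] := count_init i4.
have [c6 [r6 i6]] := count_phase i5.
have [c7 [r7 i7]] := scan_init i6.
have [c8 [r8 [th i8]]] := scan_phase i7.
have [c9 [r9 i9]] := select_init i8.
have [[pc10 m10] [r10 [/= pc10_eq e4 e5 e12 e_out]]] := select_phase i9; subst pc10.
have [_ _ _ _ _ hgt_le le_heq _ _ _ _ _ _] := i8.
have size_sel := size_select hgt_le le_heq.
have [c11 [r11 i11]] := shift_init (out := fun x => m10 (Sel + x)) e4 e5 e12
  (fun x _ => erefl) (congr1 m10 (addn0 _)).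
have [c12 [r12 i12]] := shift_phase i11.
have [c13 [r13 i13]] := restore_init i12.
have [c14 [r14 i14]] := restore_phase i13.
have [m' [r15 [out_K out_sel]]] := restore_final i14.
exists m', th; split=> //; first last.
- by move=> j hj; rewrite out_sel // e_out // size_sel.
- by rewrite hgt_le.
have le_K_n : K <= n := geq_minr _ _.
apply: reach_le (_ : _ <= 200 * n + 200) _; last first.
  by do 14 (apply: reach_trans; first eassumption); exact: r15.
lia.
Qed.

End ProgCorrectness.

Section Instance.
Variables (n beta : nat) (tI tE : 'I_n -> nat).
Local Notation m0 := (init_mem n beta tI tE).

Lemma init_mem_free x : n + n + 2 <= x -> m0 x = 0.
Proof.
move=> hx; rewrite /init_mem ifF; last by apply/eqP; lia.
rewrite ifF; last by apply/eqP; lia.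
rewrite ifF; last by apply/negbTE; rewrite -leqNgt; lia.
by rewrite nth_default // size_codom card_ord; lia.
Qed.

Lemma init_mem_tI (x : 'I_n) : m0 (2 + x) = tI x.
Proof.
rewrite /init_mem /= addKn ltn_ord.
by rewrite codomE (nth_map x) ?nth_ord_enum // size_enum_ord.
Qed.

Lemma valid_tI_le_n : valid_thresholds (Kn_adj n) tI tE -> forall x, tI x <= n.
Proof.
move=> valid x; have [le_IE le_E] := valid x.
have card_nbhd : #|nbhd (Kn_adj n) x| = n.-1.
  by rewrite -[n in RHS]card_ord -(cardsC1 x); apply: eq_card => y; rewrite !inE eq_sym.
by move: le_E; rewrite card_nbhd; have := ltn_ord x; lia.
Qed.

End Instance.

Lemma output_set_seq n m (s : seq nat) : m 0 = size s ->
  (forall j, j < size s -> m j.+1 = nth 0 s j) -> output_set n m = [set x : 'I_n | (x : nat) \in s].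
Proof.
move=> m_size m_nth; apply/setP => x; rewrite !inE; apply/existsP/idP.
  by case=> j /eqP <-; rewrite m_nth -?m_size // mem_nth // -m_size.
move=> xs; have lt_idx : index (val x) s < m 0 by rewrite m_size index_mem.
by exists (Ordinal lt_idx); rewrite /= m_nth ?nth_index // -m_size.
Qed.

Lemma card_set_val_mem n (s : seq nat) : uniq s -> {subset s <= gtn n} ->
  #|[set x : 'I_n | (x : nat) \in s]| = size s.
Proof.
move=> s_uniq s_lt; have -> : [set x : 'I_n | (x : nat) \in s] = [set x in pmap insub s].
  by apply/setP=> x; rewrite !inE mem_pmap_sub.
rewrite cardsE (card_uniqP (pmap_sub_uniq _ s_uniq)) size_pmap_sub.
by apply/eqP; rewrite -all_count; apply/allP.
Qed.

Lemma Prog_top_set n beta (tI tE : 'I_n -> nat) : (forall x, tI x <= n) ->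
  exists m', reach Prog (0, init_mem n beta tI tE) (186, m') (200 * n + 200) /\
             top_set tI (minn beta n) (output_set n m').
Proof.
move=> tI_le; case: (posnP n) => [n0 | n_gt0].
  subst n; exists (init_mem 0 beta tI tE); split; first by exists 1.
  split=> [|[] //]; apply/eqP; rewrite minn0 -leqn0.
  by apply: leq_trans (max_card _) _; rewrite card_ord.
set tv := fun i => init_mem n beta tI tE (2 + i).
have tv_le_n i : i < n -> tv i <= n by move=> lt_i; rewrite /tv (init_mem_tI _ _ _ (Ordinal lt_i)).
have [m' [th [run /andP[hgt_le le_heq] m'_size m'_sel]]] :=
  Prog_run (erefl _) (erefl _) (@init_mem_free n beta tI tE) tv_le_n n_gt0.
case: (select_spec tv th (minn beta n - count_gt tv n th) n) => _ _ sel_mem sel_uniq.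
have size_sel := size_select hgt_le le_heq.
set s := (select tv th (minn beta n - count_gt tv n th) n).2 in sel_mem sel_uniq size_sel m'_sel.
exists m'; split=> //; rewrite (@output_set_seq n m' s) ?size_sel //.
split=> [|x y]; first by rewrite card_set_val_mem // => i; rewrite sel_mem => /andP[].
rewrite !inE -!(@init_mem_tI n beta tI tE) => x_sel y_sel.
exact: (select_top x_sel (ltn_ord y) y_sel).
Qed.

Theorem theorem5 :
  exists (P : seq instr) (c : nat),
    forall (n beta : nat) (tI tE : 'I_n -> nat),
      valid_thresholds (Kn_adj n) tI tE ->
      let fin := exec P (c * n + c) (0, init_mem n beta tI tE) in
      halted P fin /\
      MES_optimal (Kn_adj n) tI tE beta (output_set n fin.2).
Proof.
exists Prog, 200 => n beta tI tE valid fin.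
have [m' [run top]] := Prog_top_set beta tE (valid_tI_le_n valid).
have -> : fin = (186, m') by apply: exec_reach_halted run _ _.
split=> //; apply: top_set_optimal; first by move=> x; case: (valid x).
by rewrite card_ord.
Qed.
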